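(* Let $P,K\in\mathcal K^d$ with $P\subset K$ and let $x,y\in K\setminus P$. Write $P^x:=\operatorname{conv}(P\cup\{x\})$, $P^y:=\operatorname{conv}(P\cup\{y\})$, $P^{xy}:=\operatorname{conv}(P\cup\{x,y\})$, and for $w\in K\setminus P$ let $\mathcal V_w(P):=\{z\in K\setminus P:[z,w]\cap P=\emptyset\}$. If $\mathcal V_x(P)\cap\mathcal V_y(P)=\emptyset$, then $$P^x\cap P^y=P,\qquad P^x\cup P^y=P^{xy},$$ and for every valuation $\psi:\mathcal K^d\to\mathbb R$, $$\psi(P^{xy})-\psi(P^x)-\psi(P^y)+\psi(P)=0.$$
   Context: $\mathcal K^d$ is the set of compact convex subsets of $\mathbb R^d$; $[z,w]$ denotes the closed line segment between $z$ and $w$. A valuation is a map $\psi:\mathcal K^d\to\mathbb R$ with $\psi(A)+\psi(B)=\psi(A\cup B)+\psi(A\cap B)$ whenever $A,B,A\cup B\in\mathcal K^d$. *)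

From Stdlib Require Import Reals Lra List.
Import ListNotations.
Open Scope R_scope.

Definition pt (d : nat) : Type := {i : nat | (i < d)%nat} -> R.

Definition pset (d : nat) : Type := pt d -> Prop.

Definition coord {d : nat} (v : pt d) (i : nat) : R :=
  match Compare_dec.lt_dec i d with
  | left h => v (exist _ i h)
  | right _ => 0
  end.

Definition padd {d : nat} (v w : pt d) : pt d := fun i => v i + w i.
Definition pscale {d : nat} (t : R) (v : pt d) : pt d := fun i => t * v i.

Definition dist {d : nat} (v w : pt d) : R :=
  sqrt (fold_right Rplus 0
          (map (fun i => (coord v i - coord w i) ^ 2) (seq 0 d))).

Definition is_closed {d : nat} (A : pset d) : Prop :=
  forall z, ~ A z -> exists eps, 0 < eps /\ forall w, dist z w < eps -> ~ A w.

Definition is_bounded {d : nat} (A : pset d) : Prop :=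
  exists M, forall z w, A z -> A w -> dist z w <= M.

(* Compact = closed and bounded (Heine-Borel in R^d). *)
Definition is_compact {d : nat} (A : pset d) : Prop := is_closed A /\ is_bounded A.

Definition segment {d : nat} (z w : pt d) : pset d :=
  fun u => exists t, 0 <= t <= 1 /\ u = padd (pscale (1 - t) z) (pscale t w).

Definition is_convex {d : nat} (A : pset d) : Prop :=
  forall z w, A z -> A w -> forall u, segment z w u -> A u.

(* K^d: compact convex subsets (the empty set included). *)
Definition convex_body {d : nat} (A : pset d) : Prop := is_compact A /\ is_convex A.

Definition conv {d : nat} (S : pset d) : pset d :=
  fun u => forall C : pset d, is_convex C -> (forall w, S w -> C w) -> C u.

Definition setU {d : nat} (A B : pset d) : pset d := fun u => A u \/ B u.
Definition setI {d : nat} (A B : pset d) : pset d := fun u => A u /\ B u.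
Definition set1 {d : nat} (x : pt d) : pset d := fun u => u = x.

Definition Vis {d : nat} (K P : pset d) (w : pt d) : pset d :=
  fun z => K z /\ ~ P z /\ (forall u, segment z w u -> ~ P u).

(* valuation on K^d (psi given on all sets, only values on K^d matter) *)
Definition valuation {d : nat} (psi : pset d -> R) : Prop :=
  forall A B : pset d, convex_body A -> convex_body B -> convex_body (setU A B) ->
    psi A + psi B = psi (setU A B) + psi (setI A B).

(* For a nonempty convex set P and any point w, conv (P ∪ {w}) is the union of the
   segments [q,w], q ∈ P (the set [cone P w] below).  The proof has three parts.
   1. If V_x(P) and V_y(P) are disjoint, then the segment [x,y] meets P, for
      otherwise x itself would lie in both regions; so P contains a point p of
      the open segment (x,y).
   2. Using p, every convex combination a q + b x + c y (q ∈ P) can be rewritten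
      as a point of [cone P x] or of [cone P y]; hence cone P x ∪ cone P y is
      convex and equals conv (P ∪ {x,y}).  A point of cone P x ∩ cone P y outside
      P would see both x and y without meeting P, so the intersection is P.
   3. cone P x is compact (a Bolzano-Weierstrass argument on the segment
      parameter), so the four sets involved are convex bodies and the
      valuation identity is the inclusion-exclusion property of psi. *)

From Stdlib Require Import Reals Lra List Classical ClassicalEpsilon
  FunctionalExtensionality PropExtensionality ProofIrrelevance.
From Stdlib Require Rtopology.
Open Scope R_scope.

Lemma coord_lt {d} (v : pt d) (j : {i | (i < d)%nat}) : coord v (proj1_sig j) = v j.
Proof.
  destruct j as [i h]; unfold coord; simpl.
  destruct (Compare_dec.lt_dec i d) as [h'|h']; [|contradiction].
  rewrite (proof_irrelevance _ h' h); reflexivity.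
Qed.

Lemma sum_nonneg (f : nat -> R) l :
  (forall k, 0 <= f k) -> 0 <= fold_right Rplus 0 (map f l).
Proof. intros H; induction l; simpl; [lra|]. specialize (H a); lra. Qed.

Lemma sum_ge_term (f : nat -> R) l i :
  (forall k, 0 <= f k) -> In i l -> f i <= fold_right Rplus 0 (map f l).
Proof.
  intros H; induction l; simpl; [tauto|]. intros [->|Hi].
  - pose proof (sum_nonneg f l H); lra.
  - specialize (IHl Hi); specialize (H a); lra.
Qed.

Lemma sum_le_length_mul (f : nat -> R) l e :
  (forall k, f k <= e) -> fold_right Rplus 0 (map f l) <= INR (length l) * e.
Proof.
  intros H; induction l; cbn [fold_right map length]; [simpl; lra|].
  rewrite S_INR. specialize (H a). lra.
Qed.

Lemma abs_le_dist {d} (v w : pt d) j : Rabs (v j - w j) <= dist v w.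
Proof.
  rewrite <- !coord_lt. unfold dist. rewrite <- sqrt_Rsqr_abs. apply sqrt_le_1_alt.
  set (f := fun i => (coord v i - coord w i) ^ 2).
  replace (Rsqr _) with (f (proj1_sig j)) by (unfold f, Rsqr; ring).
  apply sum_ge_term; [intros k; apply pow2_ge_0|].
  apply in_seq. destruct j; simpl; split; [apply Nat.le_0_l|assumption].
Qed.

Lemma dist_lt_of_coords {d} (v w : pt d) eps : 0 < eps ->
  (forall j, Rabs (v j - w j) <= eps / (INR d + 1)) -> dist v w < eps.
Proof.
  intros He H. pose proof (pos_INR d) as Hd.
  set (c := eps / (INR d + 1)) in H.
  assert (Hc : 0 < c) by (unfold c; apply Rdiv_lt_0_compat; lra).
  assert (Hec : eps = c * (INR d + 1)) by (unfold c; field; lra).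
  assert (Hsum : fold_right Rplus 0
             (map (fun i => (coord v i - coord w i) ^ 2) (seq 0 d)) <= INR d * c ^ 2).
  { rewrite <- (length_seq d 0) at 2. apply sum_le_length_mul. intros k.
    rewrite <- pow2_abs. apply pow_incr. split; [apply Rabs_pos|].
    unfold coord. destruct (Compare_dec.lt_dec k d) as [h|h].
    - apply (H (exist _ k h)).
    - replace (0 - 0) with 0 by ring. rewrite Rabs_R0; lra. }
  unfold dist. rewrite <- (sqrt_pow2 eps) by lra. apply sqrt_lt_1_alt. split.
  - apply sum_nonneg. intros; apply pow2_ge_0.
  - rewrite Hec. simpl in *. nra.
Qed.

Lemma closed_of_approx {d} (A : pset d) r : is_closed A ->
  (forall e, 0 < e -> exists q, A q /\ forall j, Rabs (r j - q j) <= e) -> A r.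
Proof.
  intros HA Happ. apply NNPP; intro Hr. destruct (HA r Hr) as [eps [Heps Hball]].
  pose proof (pos_INR d).
  destruct (Happ (eps / (INR d + 1))) as [q [Hq Hqj]];
    [apply Rdiv_lt_0_compat; lra|].
  exact (Hball q (dist_lt_of_coords r q eps Heps Hqj) Hq).
Qed.

Lemma bounded_coords {d} (P : pset d) (x p : pt d) : is_bounded P -> P p ->
  exists C, 0 <= C /\ forall q j, P q -> Rabs (q j - x j) <= C.
Proof.
  intros [M HM] Hp. exists (M + dist p x). pose proof (HM p p Hp Hp).
  assert (0 <= dist p p) by apply sqrt_pos. assert (0 <= dist p x) by apply sqrt_pos.
  split; [lra|]. intros q j Hq.
  replace (q j - x j) with ((q j - p j) + (p j - x j)) by ring.
  eapply Rle_trans; [apply Rabs_triang|].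
  pose proof (abs_le_dist q p j). pose proof (abs_le_dist p x j).
  pose proof (HM q p Hq Hp). lra.
Qed.

Lemma closed_union {d} (A B : pset d) :
  is_closed A -> is_closed B -> is_closed (setU A B).
Proof.
  intros HA HB z Hz. destruct (HA z) as [e1 [He1 Hb1]]; [intro; apply Hz; left; auto|].
  destruct (HB z) as [e2 [He2 Hb2]]; [intro; apply Hz; right; auto|].
  exists (Rmin e1 e2). split; [apply Rmin_pos; auto|].
  intros w Hw [Hw'|Hw'].
  - apply (Hb1 w); auto. pose proof (Rmin_l e1 e2); lra.
  - apply (Hb2 w); auto. pose proof (Rmin_r e1 e2); lra.
Qed.

Lemma bounded_sub {d} (A K : pset d) :
  (forall u, A u -> K u) -> is_bounded K -> is_bounded A.
Proof. intros H [M HM]. exists M. intros; auto. Qed.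

Lemma set_ext {d} (A B : pset d) : (forall u, A u <-> B u) -> A = B.
Proof.
  intros H. apply functional_extensionality; intro u.
  apply propositional_extensionality; auto.
Qed.

Lemma div_nonneg a b : 0 <= a -> 0 < b -> 0 <= a / b.
Proof. intros Ha Hb. apply Rmult_le_pos; [exact Ha|left; apply Rinv_0_lt_compat, Hb]. Qed.

Lemma div_le a b c : 0 < b -> a <= c * b -> a / b <= c.
Proof.
  intros Hb H. apply (Rmult_le_reg_r b); [exact Hb|].
  unfold Rdiv. rewrite Rmult_assoc, Rinv_l by lra. lra.
Qed.

Lemma pt_eq {d} (u v : pt d) : (forall j, u j = v j) -> u = v.
Proof. intros; apply functional_extensionality; auto. Qed.

Lemma segment_coords {d} (z w u : pt d) : segment z w u ->
  exists t, 0 <= t <= 1 /\ forall j, u j = (1 - t) * z j + t * w j.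
Proof. intros [t [Ht ->]]. exists t; split; auto. Qed.

Lemma segment_of_coords {d} (z w u : pt d) t : 0 <= t <= 1 ->
  (forall j, u j = (1 - t) * z j + t * w j) -> segment z w u.
Proof. intros Ht H. exists t; split; auto. apply pt_eq; intro j; apply H. Qed.

Lemma convex_comb {d} (P : pset d) q q' a b : is_convex P -> P q -> P q' ->
  0 <= a -> 0 <= b -> exists q'', P q'' /\ forall j, a * q j + b * q' j = (a + b) * q'' j.
Proof.
  intros HP Hq Hq' Ha Hb. destruct (Req_dec (a + b) 0) as [H0|H0].
  - exists q; split; auto. intros j. replace a with 0 by lra. replace b with 0 by lra. ring.
  - set (t := b / (a + b)).
    assert (Ht : 0 <= t <= 1).
    { unfold t. split; [apply div_nonneg; lra|]. apply div_le; lra. }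
    exists (padd (pscale (1 - t) q) (pscale t q')). split.
    + apply (HP q q' Hq Hq'). exists t. split; [exact Ht|reflexivity].
    + intros j. unfold padd, pscale, t. field. exact H0.
Qed.

Lemma conv_convex {d} (S : pset d) : is_convex (conv S).
Proof. intros z w Hz Hw u Hu C HC HS. exact (HC z w (Hz C HC HS) (Hw C HC HS) u Hu). Qed.

Lemma conv_incl {d} (S : pset d) u : S u -> conv S u.
Proof. intros H C HC HS; auto. Qed.

Definition cone {d} (P : pset d) (x : pt d) : pset d :=
  fun u => exists q s, P q /\ 0 <= s <= 1 /\ forall j, u j = (1 - s) * q j + s * x j.

Lemma cone_base {d} (P : pset d) x q : P q -> cone P x q.
Proof. intros Hq. exists q, 0. split; [auto|split; [lra|]]. intros; ring. Qed.

Lemma cone_apex {d} (P : pset d) x p : P p -> cone P x x.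
Proof. intros Hp. exists p, 1. split; [auto|split; [lra|]]. intros; ring. Qed.

Lemma cone_convex {d} (P : pset d) x : is_convex P -> is_convex (cone P x).
Proof.
  intros HP z w [q1 [s1 [Hq1 [Hs1 Hz]]]] [q2 [s2 [Hq2 [Hs2 Hw]]]] u Hu.
  destruct (segment_coords _ _ _ Hu) as [t [Ht Hut]].
  destruct (convex_comb P q1 q2 ((1 - t) * (1 - s1)) (t * (1 - s2)) HP Hq1 Hq2)
    as [q [Hq Hc]]; [nra|nra|].
  exists q, ((1 - t) * s1 + t * s2). split; [auto|split; [nra|]].
  intros j. rewrite Hut, Hz, Hw.
  replace (1 - ((1 - t) * s1 + t * s2)) with ((1 - t) * (1 - s1) + t * (1 - s2)) by ring.
  rewrite <- Hc. ring.
Qed.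

Lemma cone_least {d} (P C : pset d) x : is_convex C -> (forall z, P z -> C z) -> C x ->
  forall u, cone P x u -> C u.
Proof.
  intros HC HPC Hx u [q [s [Hq [Hs Hu]]]].
  apply (HC q x); auto. apply (segment_of_coords _ _ _ s); auto.
Qed.

Lemma conv_cone {d} (P : pset d) x p : is_convex P -> P p ->
  conv (setU P (set1 x)) = cone P x.
Proof.
  intros HP Hp. apply set_ext; intro u; split.
  - intros Hu. apply Hu; [apply cone_convex; auto|].
    intros w [Hw|Hw]; [apply cone_base; auto|rewrite Hw; apply (cone_apex P x p Hp)].
  - apply cone_least; [apply conv_convex| |].
    + intros; apply conv_incl; left; auto.
    + apply conv_incl; right; reflexivity.
Qed.

(* A point of the cone outside P sees the apex without meeting P: if [z,x]
   met P, then z would lie between two points of P on the segment [q,x]. *)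
Lemma cone_visible {d} (K P : pset d) x z : is_convex P -> is_convex K ->
  (forall z, P z -> K z) -> K x -> cone P x z -> ~ P z -> Vis K P x z.
Proof.
  intros HP HK HPK Hx Hz Hnz.
  split; [exact (cone_least P K x HK HPK Hx z Hz)|split; [exact Hnz|]].
  destruct Hz as [q [s [Hq [Hs Hz]]]].
  intros u Hu HPu. destruct (segment_coords _ _ _ Hu) as [t [Ht Hut]].
  (* u = (1 - sig) q + sig x, and z lies on [q,u] at parameter s / sig *)
  set (sig := 1 - (1 - t) * (1 - s)).
  destruct (Req_dec sig 0) as [H0|H0].
  - assert (s = 0) by (unfold sig in H0; nra).
    apply Hnz. replace z with q; auto. apply pt_eq; intros j; rewrite Hz; subst s; ring.
  - assert (Hsig : 0 < sig) by (unfold sig in *; nra).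
    apply Hnz, (HP q u Hq HPu), (segment_of_coords _ _ _ (s / sig)).
    + split; [apply div_nonneg; lra|]. apply div_le; [lra|]. unfold sig; nra.
    + intros j. rewrite Hut, Hz. unfold sig in *. field. exact H0.
Qed.

Section TwoCones.

Variable d : nat.
Variables (P : pset d) (x y p : pt d) (tau : R).
Hypothesis HP : is_convex P.
Hypothesis Hp : P p.
Hypothesis Hpxy : forall j, p j = (1 - tau) * x j + tau * y j.
Hypothesis Htau : 0 < tau < 1.

(* If the weight of y is small relative to that of x, the y-part of
   a q + b x + c y can be traded, through p, for a point of P and some x. *)
Lemma cone_of_weights (x' y' : pt d) (tau' : R) q a b c u :
  P q -> (forall j, p j = (1 - tau') * x' j + tau' * y' j) -> 0 < tau' ->
  0 <= a -> 0 <= b -> 0 <= c -> a + b + c = 1 -> c * (1 - tau') <= b * tau' ->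
  (forall j, u j = a * q j + b * x' j + c * y' j) -> cone P x' u.
Proof.
  intros Hq Hp' Ht Ha Hb Hc Hsum Hcb Hu.
  set (mu := c / tau'). set (s := b - c * (1 - tau') / tau').
  assert (Hmu : 0 <= mu) by (apply div_nonneg; lra).
  assert (Hs0 : 0 <= s).
  { unfold s. cut (c * (1 - tau') / tau' <= b); [lra|].
    apply div_le; lra. }
  destruct (convex_comb P q p a mu HP Hq Hp Ha Hmu) as [q' [Hq' Hc']].
  assert (Hs1 : a + mu = 1 - s)
    by (unfold mu, s; replace a with (1 - b - c) by lra; field; lra).
  exists q', s. split; [auto|split; [lra|]].
  intros j. rewrite <- Hs1, <- Hc', Hu, Hp'. unfold mu, s. field. lra.
Qed.

Lemma cone_split q a b c u : P q ->
  0 <= a -> 0 <= b -> 0 <= c -> a + b + c = 1 ->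
  (forall j, u j = a * q j + b * x j + c * y j) -> cone P x u \/ cone P y u.
Proof.
  intros Hq Ha Hb Hc Hsum Hu.
  destruct (Rle_lt_dec (c * (1 - tau)) (b * tau)) as [Hcb|Hcb].
  - left. apply (cone_of_weights x y tau q a b c u); auto; lra.
  - right. apply (cone_of_weights y x (1 - tau) q a c b u); auto; try lra.
    + intros j; rewrite Hpxy; ring.
    + intros j; rewrite Hu; ring.
Qed.

Lemma segment_between_cones z w t u : cone P x z -> cone P y w -> 0 <= t <= 1 ->
  (forall j, u j = (1 - t) * z j + t * w j) -> cone P x u \/ cone P y u.
Proof.
  intros [q1 [s1 [Hq1 [Hs1 Hz]]]] [q2 [s2 [Hq2 [Hs2 Hw]]]] Ht Hu.
  destruct (convex_comb P q1 q2 ((1 - t) * (1 - s1)) (t * (1 - s2)) HP Hq1 Hq2)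
    as [q [Hq Hc]]; [nra|nra|].
  apply (cone_split q ((1 - t) * (1 - s1) + t * (1 - s2)) ((1 - t) * s1) (t * s2) u);
    auto; try nra.
  intros j. rewrite Hu, Hz, Hw, <- Hc. ring.
Qed.

Lemma cones_union_convex : is_convex (setU (cone P x) (cone P y)).
Proof.
  intros z w Hz Hw u Hu. destruct (segment_coords _ _ _ Hu) as [t [Ht Hut]].
  destruct Hz as [Hz|Hz]; destruct Hw as [Hw|Hw].
  - left. exact (cone_convex P x HP z w Hz Hw u Hu).
  - exact (segment_between_cones z w t u Hz Hw Ht Hut).
  - apply (segment_between_cones w z (1 - t) u Hw Hz); [lra|].
    intros j; rewrite Hut; ring.
  - right. exact (cone_convex P y HP z w Hz Hw u Hu).
Qed.

Lemma conv_two_cones :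
  conv (setU P (setU (set1 x) (set1 y))) = setU (cone P x) (cone P y).
Proof.
  apply set_ext; intro u; split.
  - intros Hu. apply Hu; [exact cones_union_convex|].
    intros w [Hw|[Hw|Hw]]; rewrite ?Hw.
    + left; apply cone_base; auto.
    + left; apply (cone_apex P x p Hp).
    + right; apply (cone_apex P y p Hp).
  - rewrite <- (conv_cone P x p HP Hp), <- (conv_cone P y p HP Hp).
    intros [Hu|Hu]; intros C HC HS; apply Hu; auto; intros w [Hw|Hw]; apply HS;
      [left|right; left|left|right; right]; auto.
Qed.

End TwoCones.

(* If V_x(P) and V_y(P) are disjoint, P meets the open segment (x,y):
   otherwise x would belong to both visibility regions. *)
Lemma segment_meets {d} (K P : pset d) x y : K x -> ~ P x -> K y -> ~ P y ->
  (forall z, ~ (Vis K P x z /\ Vis K P y z)) ->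
  exists p tau, P p /\ 0 < tau < 1 /\ forall j, p j = (1 - tau) * x j + tau * y j.
Proof.
  intros Kx nPx Ky nPy HV. apply NNPP; intro Hn. apply (HV x). split.
  - split; [auto|split; [auto|]]. intros u Hu HPu.
    destruct (segment_coords _ _ _ Hu) as [t [_ Ht]].
    apply nPx. replace x with u; auto. apply pt_eq; intros j; rewrite Ht; ring.
  - split; [auto|split; [auto|]]. intros u Hu HPu.
    destruct (segment_coords _ _ _ Hu) as [t [Ht Hut]].
    destruct (Req_dec t 0) as [->|Ht0].
    + apply nPx. replace x with u; auto. apply pt_eq; intros j; rewrite Hut; ring.
    + destruct (Req_dec t 1) as [->|Ht1].
      * apply nPy. replace y with u; auto. apply pt_eq; intros j; rewrite Hut; ring.
      * apply Hn. exists u, t. split; [auto|split; [lra|auto]].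
Qed.

Lemma cones_meet {d} (K P : pset d) x y : is_convex P -> is_convex K ->
  (forall z, P z -> K z) -> K x -> K y ->
  (forall z, ~ (Vis K P x z /\ Vis K P y z)) ->
  setI (cone P x) (cone P y) = P.
Proof.
  intros HP HK HPK Kx Ky HV. apply set_ext; intro z; split.
  - intros [Hx Hy]. apply NNPP; intro Hnz. apply (HV z).
    split; apply cone_visible; auto.
  - intros Hz; split; apply cone_base; auto.
Qed.

Lemma cluster_point_01 (s : nat -> R) : (forall n, 0 <= s n <= 1) ->
  exists l, 0 <= l <= 1 /\
    forall del, 0 < del -> forall N, exists n, (N <= n)%nat /\ Rabs (s n - l) < del.
Proof.
  intros Hs.
  destruct (Rtopology.Bolzano_Weierstrass s (fun c => 0 <= c <= 1)
              (Rtopology.compact_P3 0 1) Hs) as [l Hl].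
  assert (Hval : forall del, 0 < del -> forall N, exists n,
             (N <= n)%nat /\ Rabs (s n - l) < del).
  { intros del Hdel N.
    destruct (Hl (Rtopology.disc l (mkposreal del Hdel)) N) as [n [HN Hn]].
    - exists (mkposreal del Hdel). intros v Hv; exact Hv.
    - exists n; split; auto. }
  exists l. split; [split|exact Hval].
  - destruct (Rle_lt_dec 0 l) as [|Hlt]; auto.
    destruct (Hval (- l) ltac:(lra) 0%nat) as [n [_ Hn]].
    specialize (Hs n). apply Rabs_def2 in Hn. lra.
  - destruct (Rle_lt_dec l 1) as [|Hlt]; auto.
    destruct (Hval (l - 1) ltac:(lra) 0%nat) as [n [_ Hn]].
    specialize (Hs n). apply Rabs_def2 in Hn. lra.
Qed.

Lemma inv_succ_small e : 0 < e -> exists N, forall n, (N <= n)%nat -> / (INR n + 1) <= e.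
Proof.
  intros He. destruct (archimed_cor1 e He) as [N [HN HN0]].
  exists N. intros n Hn. apply le_INR in Hn. apply lt_INR in HN0. simpl in HN0.
  apply Rle_trans with (/ INR N); [apply Rinv_le_contravar; lra|lra].
Qed.

Lemma cone_of_limit {d} (P : pset d) x z l p : is_closed P -> P p -> 0 <= l <= 1 ->
  (forall e, 0 < e -> exists q, P q /\ forall j, Rabs (z j - l * x j - (1 - l) * q j) <= e) ->
  cone P x z.
Proof.
  intros HPc Hp Hl HE. destruct (Req_dec l 1) as [->|Hl1].
  - exists p, 1. split; [auto|split; [lra|]]. intros j.
    apply cond_eq. intros e He.
    destruct (HE (e / 2)) as [q [_ Hq]]; [lra|]. specialize (Hq j).
    replace (z j - ((1 - 1) * p j + 1 * x j)) with (z j - 1 * x j - (1 - 1) * q j) by ring.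
    lra.
  - set (r := fun j => (z j - l * x j) / (1 - l)).
    assert (Hr : P r).
    { apply closed_of_approx; [exact HPc|]. intros e He.
      destruct (HE ((1 - l) * e)) as [q [Hq Hqj]]; [apply Rmult_lt_0_compat; lra|].
      exists q. split; [exact Hq|]. intros j.
      replace (r j - q j) with ((z j - l * x j - (1 - l) * q j) / (1 - l))
        by (unfold r; field; lra).
      unfold Rdiv. rewrite Rabs_mult, Rabs_inv, (Rabs_right (1 - l)) by lra.
      apply (Rmult_le_reg_r (1 - l)); [lra|].
      rewrite Rmult_assoc, Rinv_l, Rmult_1_r by lra. specialize (Hqj j). lra. }
    exists r, l. split; [auto|split; [lra|]]. intros j. unfold r. field. lra.
Qed.

Lemma cone_closed {d} (P : pset d) x p : is_closed P -> is_bounded P -> P p ->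
  is_closed (cone P x).
Proof.
  intros HPc HPb Hp z Hz. apply NNPP; intro Hnear.
  assert (Happ : forall n : nat, exists sq : R * pt d, 0 <= fst sq <= 1 /\ P (snd sq) /\
     forall j, Rabs (z j - (1 - fst sq) * snd sq j - fst sq * x j) <= / (INR n + 1)).
  { intro n. assert (Hpos : 0 < / (INR n + 1))
      by (apply Rinv_0_lt_compat; pose proof (pos_INR n); lra).
    apply NNPP; intro Hno. apply Hnear. exists (/ (INR n + 1)). split; [exact Hpos|].
    intros w Hw [q [s [Hq [Hs Hwj]]]]. apply Hno. exists (s, q). simpl.
    split; [auto|split; [auto|]]. intros j. pose proof (abs_le_dist z w j) as Hj.
    rewrite Hwj in Hj.
    replace (z j - (1 - s) * q j - s * x j) with (z j - ((1 - s) * q j + s * x j)) by ring.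
    lra. }
  destruct (choice _ Happ) as [f Hf].
  destruct (cluster_point_01 (fun n => fst (f n))) as [l [Hl Hclust]];
    [intro n; apply (Hf n)|].
  destruct (bounded_coords P x p HPb Hp) as [C [HC0 HC]].
  apply Hz, (cone_of_limit P x z l p HPc Hp Hl). intros e He.
  destruct (inv_succ_small (e / 2)) as [N HN]; [lra|].
  destruct (Hclust (e / (2 * (C + 1)))) with N as [n [HNn Hn]];
    [apply Rdiv_lt_0_compat; lra|].
  destruct (Hf n) as [_ [Hq Hj]]. set (s := fst (f n)) in *. set (q := snd (f n)) in *.
  exists q. split; [exact Hq|]. intros j.
  replace (z j - l * x j - (1 - l) * q j)
    with ((z j - (1 - s) * q j - s * x j) + (s - l) * (x j - q j)) by ring.
  eapply Rle_trans; [apply Rabs_triang|]. rewrite Rabs_mult.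
  assert (Hsl : Rabs (s - l) * Rabs (x j - q j) <= e / (2 * (C + 1)) * C).
  { apply Rmult_le_compat; try apply Rabs_pos; [lra|].
    rewrite Rabs_minus_sym. apply HC; auto. }
  assert (HeC : e / (2 * (C + 1)) * C <= e / 2).
  { apply (Rmult_le_reg_r (2 * (C + 1))); [lra|].
    replace (e / (2 * (C + 1)) * C * (2 * (C + 1))) with (e * C) by (field; lra). nra. }
  specialize (Hj j). specialize (HN n HNn). lra.
Qed.

Lemma cone_body {d} (K P : pset d) x p : convex_body K -> convex_body P ->
  (forall z, P z -> K z) -> K x -> P p -> convex_body (cone P x).
Proof.
  intros [[_ HKb] HK] [[HPc HPb] HP] HPK Kx Hp.
  split; [split|apply cone_convex; exact HP].
  - exact (cone_closed P x p HPc HPb Hp).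
  - exact (bounded_sub _ K (cone_least P K x HK HPK Kx) HKb).
Qed.

Lemma valuation_incl_excl {d} (psi : pset d -> R) (K A B : pset d) :
  valuation psi -> is_bounded K -> (forall u, setU A B u -> K u) ->
  convex_body A -> convex_body B -> is_convex (setU A B) ->
  psi (setU A B) - psi A - psi B + psi (setI A B) = 0.
Proof.
  intros Hpsi HKb HABK HA HB HU.
  assert (HUb : convex_body (setU A B)).
  { split; [split|exact HU].
    - apply closed_union; [apply HA|apply HB].
    - exact (bounded_sub _ K HABK HKb). }
  pose proof (Hpsi A B HA HB HUb). lra.
Qed.

Theorem lemma4p3 (d : nat) (P K : pset d) (x y : pt d) :
  convex_body P -> convex_body K -> (forall z, P z -> K z) ->
  K x -> ~ P x -> K y -> ~ P y ->
  (forall z, ~ (Vis K P x z /\ Vis K P y z)) ->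
  (forall z, setI (conv (setU P (set1 x))) (conv (setU P (set1 y))) z <-> P z) /\
  (forall z, setU (conv (setU P (set1 x))) (conv (setU P (set1 y))) z <->
             conv (setU P (setU (set1 x) (set1 y))) z) /\
  (forall psi : pset d -> R, valuation psi ->
     psi (conv (setU P (setU (set1 x) (set1 y))))
     - psi (conv (setU P (set1 x))) - psi (conv (setU P (set1 y)))
     + psi P = 0).
Proof.
  intros HPb HKb HPK Kx nPx Ky nPy HV.
  pose proof HPb as [_ HP]. pose proof HKb as [[_ HKbd] HK].
  destruct (segment_meets K P x y Kx nPx Ky nPy HV) as [p [tau [Hp [Htau Hpxy]]]].
  rewrite (conv_cone P x p HP Hp), (conv_cone P y p HP Hp),
    (conv_two_cones d P x y p tau HP Hp Hpxy Htau).
  assert (Hmeet := cones_meet K P x y HP HK HPK Kx Ky HV).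
  split; [|split].
  - rewrite Hmeet. tauto.
  - tauto.
  - intros psi Hpsi.
    replace (psi P) with (psi (setI (cone P x) (cone P y))) by (rewrite Hmeet; reflexivity).
    apply (valuation_incl_excl psi K); auto.
    + intros u [Hu|Hu]; [exact (cone_least P K x HK HPK Kx u Hu)
                        |exact (cone_least P K y HK HPK Ky u Hu)].
    + exact (cone_body K P x p HKb HPb HPK Kx Hp).
    + exact (cone_body K P y p HKb HPb HPK Ky Hp).
    + exact (cones_union_convex d P x y p tau HP Hp Hpxy Htau).
Qed.
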